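(* For every semistandard hook-valued tableau $T$ of shape $\lambda$, the recording tableau $Q(T)$ of the uncrowding map $\mathcal U(T)=(P(T),Q(T))$ is a column-flagged increasing tableau.
   Context: French notation: row $1$ is the bottom row, rows numbered upward, columns left to right; cell $(r,c)$ is in row $r$, column $c$. A semistandard tableau of hook shape consists of a hook entry $x$, a leg $\ell_1<\dots<\ell_p$ above $x$ with $x<\ell_1$, and an arm $a_1\le\dots\le a_q$ to the right of $x$ with $x\le a_1$ ($p,q\ge0$, positive integers). A (semistandard) hook-valued tableau (HVT) of partition shape $\lambda$ is a filling of the cells of $\lambda$ by such hook tableaux with $\max(A)\le\min(B)$ whenever the cell of $A$ is left of that of $B$ in the same row, and $\max(A)<\min(C)$ whenever the cell of $A$ is below that of $C$ in the same column. Arm excess = total number of arm entries. A column-flagged increasing tableau of shape $\mu/\lambda$ (where $\lambda\subseteq\mu$ are partitions whose first columns have equal length) is a filling of the cells of $\mu/\lambda$ by positive integers, strictly increasing along rows and along columns, such that every entry in column $j$ is at most $j-1$ (i.e. its transpose is a flagged increasing tableau). Uncrowding bumping $\mathcal V_b$: if arm excess of $T$ is $0$, $\mathcal V_b(T)=T$. Otherwise let $c$ be the largest index of a column containing a cell with nonempty arm; among such cells in column $c$ let $(r,c)$ be the one whose arm contains the largest value. Let $a$ be the largest arm entry of $(r,c)$, $\ell$ its largest leg entry, and $(a,\ell]\cap\mathsf L_T(r,c)$ the set of leg entries $x$ of $(r,c)$ with $a<x\le\ell$. In column $c+1$ find the smallest entry $\ge a$. If none exists, attach a new empty cell on top of column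 $c+1$, with row $\tilde r$, and let $k$ be empty; otherwise let $k$ be this entry and $(\tilde r,c+1)$ its cell. (a) If $\tilde r\ne r$: remove $a$ from the arm of $(r,c)$, put $a$ in the position of $k$ in $(\tilde r,c+1)$ (as hook entry if the cell is new), append $k$ (if nonempty) to the arm of $(\tilde r,c+1)$. (b) If $\tilde r=r$: move $(a,\ell]\cap\mathsf L_T(r,c)$ from the leg of $(r,c)$ into the leg of $(r,c+1)$, remove $a$ from the arm of $(r,c)$, replace the hook entry of $(r,c+1)$ by $a$, append $k$ (if nonempty) to the arm of $(r,c+1)$. Uncrowding insertion: $\mathcal V(T)=\mathcal V_b^d(T)$ where $d\ge1$ is minimal such that $\mathsf{shape}(\mathcal V_b^d(T))\neq\mathsf{shape}(\mathcal V_b^{d-1}(T))$ or $\mathcal V_b^d(T)=\mathcal V_b^{d-1}(T)$. Uncrowding map: for $T\in\mathsf{HVT}(\lambda)$ with arm excess $\alpha$, set $P_0=T$ and $Q_0$ the empty tableau of shape $\lambda/\lambda$; for $1\le i\le\alpha$ let $P_i=\mathcal V(P_{i-1})$, let $c$ be the index of the rightmost column of $P_{i-1}$ containing a cell with nonzero arm excess and $\tilde c$ the column of the cell $\mathsf{shape}(P_i)/\mathsf{shape}(P_{i-1})$; $Q_i$ is $Q_{i-1}$ with this cell added and filled with $\tilde c-c$. Then $\mathcal U(T)=(P(T),Q(T)):=(P_\alpha,Q_\alpha)$. *)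

From mathcomp Require Import all_boot.
Set Implicit Arguments. Unset Strict Implicit. Unset Printing Implicit Defensive.

(* Conventions:
   - a tableau is a seq of columns (left to right); a column is a seq of
     cells from bottom (row 1) to top.  Column index j and row index i are
     0-based in the seqs: list position (i, j) is cell (row i+1, column j+1).
   - a hook tableau (cell content) is (hook entry, leg, arm). *)

Definition hcell := (nat * seq nat * seq nat)%type.
Definition hk (x : hcell) : nat := x.1.1.
Definition leg (x : hcell) : seq nat := x.1.2.
Definition arm (x : hcell) : seq nat := x.2.
Definition dcell : hcell := (0, [::], [::]).

Definition tab := seq (seq hcell).
Definition cell (T : tab) (i j : nat) : hcell := nth dcell (nth [::] T j) i.

(* shape as the list of column lengths (the conjugate partition) *)
Definition tab_shape (T : tab) : seq nat := map size T.

Definition young (s : seq nat) : bool :=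
  all (fun n => 0 < n) s && sorted geq s.

Definition valid_hook (x : hcell) : bool :=
  [&& 0 < hk x, sorted ltn (hk x :: leg x) & sorted leq (hk x :: arm x)].

Definition entries (x : hcell) : seq nat := hk x :: leg x ++ arm x.
Definition maxe (x : hcell) : nat := foldr maxn 0 (entries x).
Definition mine (x : hcell) : nat := foldr minn (hk x) (leg x ++ arm x).

Definition is_HVT (T : tab) : Prop :=
  [/\ young (tab_shape T),
      (forall j i, i < size (nth [::] T j) -> valid_hook (cell T i j)),
      (forall i j j', j < j' -> i < size (nth [::] T j') ->
         maxe (cell T i j) <= mine (cell T i j')) &
      (forall i i' j, i < i' -> i' < size (nth [::] T j) ->
         maxe (cell T i j) < mine (cell T i' j))].

Definition arm_excess (T : tab) : nat :=
  sumn [seq sumn [seq size (arm x) | x <- col] | col <- T].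

Definition arm_col (T : tab) : nat :=
  last 0 [seq j <- iota 0 (size T) |
          has (fun x => arm x != [::]) (nth [::] T j)].

Definition maxs (s : seq nat) : nat := foldr maxn 0 s.

Fixpoint repl1 (k a : nat) (s : seq nat) : seq nat :=
  match s with
  | [::] => [::]
  | y :: s' => if y == k then a :: s' else y :: repl1 k a s'
  end.

Definition Vb (T : tab) : tab :=
  if arm_excess T == 0 then T else
  let c := arm_col T in
  let col := nth [::] T c in
  let mx := maxs [seq maxs (arm x) | x <- col] in
  let r := find (fun x => (arm x != [::]) && (maxs (arm x) == mx)) col in
  let x := nth dcell col r in
  let a := maxs (arm x) in
  let l := maxs (leg x) in
  let inS := fun y => (a < y) && (y <= l) in
  let S := [seq y <- leg x | inS y] in
  let col' := nth [::] T c.+1 in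
  let ents := [seq v <- flatten [seq entries y | y <- col'] | a <= v] in
  let ok : option nat :=
      if ents is e :: _ then Some (foldr minn e ents) else None in
  let rt := if ok is Some k then find (fun y => k \in entries y) col'
            else size col' in
  let y := nth dcell col' rt in
  let addarm s := if ok is Some k then sort leq (rcons s k) else s in
  let x1 : hcell :=
      if rt != r then (hk x, leg x, rem a (arm x))
      else (hk x, [seq z <- leg x | ~~ inS z], rem a (arm x)) in
  let y1 : hcell :=
      if rt != r then
        match ok with
        | None => (a, [::], [::])
        | Some k =>
            if hk y == k then (a, leg y, addarm (arm y))
            else if k \in leg y then (hk y, sort leq (repl1 k a (leg y)), addarm (arm y))
            else (hk y, leg y, addarm (sort leq (repl1 k a (arm y))))
        end
      else (a, sort leq (S ++ leg y), addarm (arm y)) in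
  let T1 := set_nth [::] T c (set_nth dcell col r x1) in
  set_nth [::] T1 c.+1 (set_nth dcell col' rt y1).

(* The fuel (size T + 1, allowing size T + 2 steps) is
   sufficient: each non-final step moves the rightmost nonempty arm one
   column to the right. *)
Fixpoint Viter (n : nat) (T : tab) : tab :=
  let T' := Vb T in
  if (tab_shape T' != tab_shape T) || (T' == T) then T'
  else if n is n'.+1 then Viter n' T' else T'.

Definition V (T : tab) : tab := Viter (size T).+1 T.

(* the (0-based) cell (row, column) of shape s' / s, assuming it is one cell *)
Definition new_cell (s s' : seq nat) : nat * nat :=
  let j := find id [seq nth 0 s i != nth 0 s' i | i <- iota 0 (size s').+1] in
  ((nth 0 s' j).-1, j).

Definition filling := nat -> nat -> nat.

Fixpoint uncrowd_aux (n : nat) (P : tab) (Q : filling) : tab * filling :=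
  if n is n'.+1 then
    let P' := V P in
    let c := arm_col P in
    let rc := new_cell (tab_shape P) (tab_shape P') in
    let Q' := fun i j => if (i, j) == rc then rc.2 - c else Q i j in
    uncrowd_aux n' P' Q'
  else (P, Q).

Definition uncrowd (T : tab) : tab * filling :=
  uncrowd_aux (arm_excess T) T (fun _ _ => 0).
Definition uncrowdP (T : tab) : tab := (uncrowd T).1.
Definition uncrowdQ (T : tab) : filling := (uncrowd T).2.

(* column-flagged increasing tableau of shape mu / lambda, shapes given
   by column lengths, cells 0-based; the flag "entry in column j is at most
   j - 1" (1-based j) reads  Q i j <= j  for 0-based j. *)
Definition in_skew (lam mu : seq nat) (i j : nat) : bool :=
  (nth 0 lam j <= i) && (i < nth 0 mu j).

Definition col_flagged_increasing (lam mu : seq nat) (Q : filling) : Prop :=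
  [/\ young lam, young mu,
      (size lam <= size mu) /\ (forall j, nth 0 lam j <= nth 0 mu j),
      nth 0 lam 0 = nth 0 mu 0 &
      [/\ (forall i j, in_skew lam mu i j -> 0 < Q i j /\ Q i j <= j),
          (forall i j j', j < j' -> in_skew lam mu i j -> in_skew lam mu i j' ->
             Q i j < Q i j') &
          (forall i i' j, i < i' -> in_skew lam mu i j -> in_skew lam mu i' j ->
             Q i j < Q i' j)]].

From mathcomp Require Import all_boot zify.
Set Implicit Arguments. Unset Strict Implicit. Unset Printing Implicit Defensive.

(* One insertion V starts from the rightmost column c containing arms: the
   largest arm entry a moves to column c+1, where the least entry k >= a is
   bumped into an arm, and the process continues one column further right until
   some column has no entry >= a; there a new cell is created, in a column
   j > c, and recorded with entry j - c.  Every bumping step preserves the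
   hook-valued tableau conditions, and afterwards no column right of c carries
   arms, so the starting column never increases.  The bumped values form a
   weakly increasing chain of entries through the columns c+1 .. j that
   dominates the remaining arms of column c; hence an insertion starting again
   from column c passes column j before it creates a cell.  So the new entry
   j - c is strictly larger than the earlier entries of its row and column,
   which is the increasing condition, and 0 < j - c <= j is the flag. *)

Local Notation col T j := (nth [::] T j).

Lemma maxs_ge (s : seq nat) v : v \in s -> v <= maxs s.
Proof. by elim: s => //= w s IH; rewrite inE => /orP[/eqP->|/IH]; lia. Qed.

Lemma maxs_mem (s : seq nat) : s != [::] -> maxs s \in s.
Proof.
elim: s => // v [|w s] IH _; first by rewrite /= maxn0 mem_head.
rewrite [maxs _]/= inE /maxn; case: ltnP => _; last by rewrite eqxx.
by rewrite IH ?orbT.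
Qed.

Lemma mins_le (h : nat) s v : v \in h :: s -> foldr minn h s <= v.
Proof.
elim: s v => /= [|w s IH] v; first by rewrite inE => /eqP->.
have := IH h (mem_head _ _).
rewrite !inE => + /or3P[/eqP->|/eqP->|vs]; try lia.
by have := IH v; rewrite inE vs orbT => /(_ isT); lia.
Qed.

Lemma mins_mem (h : nat) s : foldr minn h s \in h :: s.
Proof.
elim: s => [|w s IH]; first exact: mem_head.
rewrite [foldr _ _ _]/= /minn !inE; case: ltnP => _; first by rewrite eqxx orbT.
by move: IH; rewrite inE => /orP[->|->]; rewrite ?orbT.
Qed.

Lemma least_optionP (s : seq nat) :
  if (if s is e :: _ then Some (foldr minn e s) else None) is Some k
  then k \in s /\ {in s, forall v, k <= v} else s = [::].
Proof.
case: s => // e s; split.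
  by have := mins_mem e (e :: s); rewrite inE => /orP[/eqP->|]; rewrite ?mem_head.
by move=> v vs; apply: mins_le; rewrite inE vs orbT.
Qed.

Definition hook_leg (z : hcell) : seq nat := hk z :: leg z.

Lemma entriesE z v : (v \in entries z) = [|| v == hk z, v \in leg z | v \in arm z].
Proof. by rewrite inE mem_cat. Qed.

Lemma entries_triple h l s v : (v \in entries (h, l, s)) = [|| v == h, v \in l | v \in s].
Proof. exact: entriesE. Qed.

Lemma hk_entries z : hk z \in entries z.
Proof. exact: mem_head. Qed.

Lemma hook_leg_entries z v : v \in hook_leg z -> v \in entries z.
Proof. by rewrite entriesE inE => /orP[->|->]; rewrite ?orbT. Qed.

Lemma maxe_ge z v : v \in entries z -> v <= maxe z.
Proof. exact: maxs_ge. Qed.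

Lemma maxe_mem z : maxe z \in entries z.
Proof. exact: (@maxs_mem (entries z)). Qed.

Lemma mine_le z v : v \in entries z -> mine z <= v.
Proof. exact: mins_le. Qed.

Lemma mine_mem z : mine z \in entries z.
Proof. exact: mins_mem. Qed.

Lemma mine_le_maxe z : mine z <= maxe z.
Proof. exact: leq_trans (mine_le (hk_entries z)) (maxe_ge (hk_entries z)). Qed.

Lemma maxe_le_mineP A B :
  reflect (forall u v, u \in entries A -> v \in entries B -> u <= v) (maxe A <= mine B).
Proof.
apply: (iffP idP) => [le_AB u v uA vB | le_AB]; last exact: le_AB (maxe_mem A) (mine_mem B).
exact: leq_trans (maxe_ge uA) (leq_trans le_AB (mine_le vB)).
Qed.

Lemma maxe_lt_mineP A B :
  reflect (forall u v, u \in entries A -> v \in entries B -> u < v) (maxe A < mine B).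
Proof.
apply: (iffP idP) => [lt_AB u v uA vB | lt_AB]; last exact: lt_AB (maxe_mem A) (mine_mem B).
exact: leq_ltn_trans (maxe_ge uA) (leq_trans lt_AB (mine_le vB)).
Qed.

Lemma valid_hookE z : valid_hook z =
  [&& 0 < hk z, all (ltn (hk z)) (leg z), uniq (leg z), sorted leq (leg z),
      all (leq (hk z)) (arm z) & sorted leq (arm z)].
Proof.
rewrite /valid_hook /= (path_sortedE ltn_trans) (path_sortedE leq_trans).
by rewrite ltn_sorted_uniq_leq; case: (0 < hk z); case: all; case: uniq; case: sorted.
Qed.

Lemma valid_hook_triple h l s : valid_hook (h, l, s) =
  [&& 0 < h, all (ltn h) l, uniq l, sorted leq l, all (leq h) s & sorted leq s].
Proof. exact: valid_hookE. Qed.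

Lemma valid_hook_leg_gt z e : valid_hook z -> e \in leg z -> hk z < e.
Proof. by rewrite valid_hookE => /and5P[_ /allP leg_gt _ _ _] /leg_gt. Qed.

Lemma valid_hook_arm_ge z e : valid_hook z -> e \in arm z -> hk z <= e.
Proof. by rewrite valid_hookE => /and5P[_ _ _ _ /andP[/allP arm_ge _]] /arm_ge. Qed.

Lemma mem_repl1 k a s v : v \in repl1 k a s -> v = a \/ v \in s.
Proof.
elim: s => //= w s IH; case: eqP => _; rewrite !inE.
  by case/orP=> [/eqP->|->]; [left | rewrite orbT; right].
by case/orP=> [->|/IH[->|->]]; [right | left | rewrite orbT; right].
Qed.

Lemma repl1_mem k a s : k \in s -> a \in repl1 k a s.
Proof.
elim: s => //= w s IH; case: (w =P k) => [_ _|ne_wk]; first exact: mem_head.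
by rewrite !inE eq_sym => /orP[/eqP/ne_wk[] | /IH ->]; rewrite orbT.
Qed.

Lemma repl1_uniq k a s : uniq s -> a \notin s -> uniq (repl1 k a s).
Proof.
elim: s => //= w s IH /andP[ws us]; rewrite inE negb_or => /andP[aw as_].
case: eqP => _ /=; first by rewrite as_ us.
rewrite IH // andbT; apply/negP => /mem_repl1[E|]; last exact/negP.
by move: aw; rewrite E eqxx.
Qed.

Lemma repl1_id k s : repl1 k k s = s.
Proof. by elim: s => //= w s ->; case: eqP => // ->. Qed.

Lemma nth_tab_shape T j : nth 0 (tab_shape T) j = size (col T j).
Proof.
case: (ltnP j (size T)) => j_lt; first by rewrite (nth_map [::]).
by rewrite !nth_default // size_map.
Qed.

Lemma size_tab_shape T : size (tab_shape T) = size T.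
Proof. exact: size_map. Qed.

Definition young_cols (T : tab) : Prop :=
  (forall j, j < size T -> 0 < size (col T j)) /\
  (forall j, size (col T j.+1) <= size (col T j)).

Lemma youngP T : young (tab_shape T) <-> young_cols T.
Proof.
rewrite /young; split.
  case/andP=> /(all_nthP 0) pos /(sortedP 0) sorted_sh; split => j.
    by move: (pos j); rewrite size_tab_shape nth_tab_shape.
  case: (ltnP j.+1 (size T)) => j_lt; last by rewrite nth_default.
  by move: (sorted_sh j); rewrite size_tab_shape !nth_tab_shape => /(_ j_lt).
case=> pos decr; apply/andP; split.
  by apply/(all_nthP 0) => j; rewrite size_tab_shape nth_tab_shape => /pos.
by apply/(sortedP 0) => j _; rewrite !nth_tab_shape /= decr.
Qed.

Lemma young_cols_mono T j j' : young_cols T -> j <= j' -> size (col T j') <= size (col T j).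
Proof.
move=> [_ decr] /subnK <-; elim: (j' - j) => //= d IH.
by rewrite addSn; apply: leq_trans (decr _) IH.
Qed.

Definition valid_hooks (T : tab) : Prop :=
  forall j i, i < size (col T j) -> valid_hook (cell T i j).
Definition rows_weak (T : tab) : Prop :=
  forall i j, i < size (col T j.+1) -> maxe (cell T i j) <= mine (cell T i j.+1).
Definition cols_strict (T : tab) : Prop :=
  forall i j, i.+1 < size (col T j) -> maxe (cell T i j) < mine (cell T i.+1 j).

Lemma is_HVT_local T :
  is_HVT T <-> [/\ young_cols T, valid_hooks T, rows_weak T & cols_strict T].
Proof.
split=> [[/youngP Y V R C] | [Y V R C]]; first by split=> // i j; [apply: R | apply: C].
split=> //; first exact/youngP.
- move=> i j j' /subnK <-; elim: (j' - j.+1) => [|d IH]; first exact: R.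
  rewrite addSn => Hs; have Hs' := leq_trans Hs (young_cols_mono Y (leqnSn _)).
  exact: leq_trans (IH Hs') (leq_trans (mine_le_maxe _) (R _ _ Hs)).
- move=> i i' j /subnK <-; elim: (i' - i.+1) => [|d IH]; first exact: C.
  rewrite addSn => Hs.
  exact: leq_trans (IH (ltnW Hs)) (leq_trans (mine_le_maxe _) (ltnW (C _ _ Hs))).
Qed.

Definition has_arm (cl : seq hcell) : bool := has (fun x => arm x != [::]) cl.
Definition arm_count (cl : seq hcell) : nat := sumn [seq size (arm x) | x <- cl].
Definition col_entries (cl : seq hcell) : seq nat := flatten [seq entries y | y <- cl].

Lemma has_armPn cl : reflect (forall i, arm (nth dcell cl i) = [::]) (~~ has_arm cl).
Proof.
apply: (iffP hasPn) => [noarm i | noarm z /(nthP dcell)[i _ <-]]; last by rewrite noarm.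
case: (ltnP i (size cl)) => [lt_i | ge_i]; last by rewrite nth_default.
by apply/eqP; rewrite -[_ == _]negbK; apply/noarm/mem_nth.
Qed.

Lemma has_arm_size T j : has_arm (col T j) -> j < size T.
Proof. by apply: contraLR; rewrite -leqNgt => /(nth_default [::]) ->. Qed.

Lemma arm_count_eq0 cl : (arm_count cl == 0) = ~~ has_arm cl.
Proof. by elim: cl => //= x cl IH; rewrite addn_eq0 IH size_eq0 negb_or negbK. Qed.

Lemma col_entriesP cl v :
  reflect (exists2 i, i < size cl & v \in entries (nth dcell cl i)) (v \in col_entries cl).
Proof.
apply: (iffP flattenP) => [[s /mapP[y y_cl ->]] v_y | [i lt_i v_i]].
  by exists (index y cl); rewrite ?index_mem ?nth_index.
by exists (entries (nth dcell cl i)); rewrite ?map_f ?mem_nth.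
Qed.

Lemma col_entries_cell T i j v :
  i < size (col T j) -> v \in entries (cell T i j) -> v \in col_entries (col T j).
Proof. by move=> lt_i v_ij; apply/col_entriesP; exists i. Qed.

Lemma col_entries_size T j v : v \in col_entries (col T j) -> j < size T.
Proof. by apply: contraLR; rewrite -leqNgt => /(nth_default [::]) ->. Qed.

Lemma last_filter_iota (p : pred nat) n j : p j -> j < n ->
  let m := last 0 [seq i <- iota 0 n | p i] in [/\ p m, m < n & j <= m].
Proof.
move=> pj; elim: n => // n IH lt_jn; rewrite -addn1 iotaD filter_cat last_cat add0n /=.
case: ifP => [pn | pnF] /=; first by split=> //; lia.
have lt_jn' : j < n by rewrite ltn_neqAle -ltnS lt_jn andbT; apply: contraFneq pnF => <-.
by case: (IH lt_jn') => pm lt_mn le_jm; split=> //; lia.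
Qed.

Lemma arm_colP T j : has_arm (col T j) ->
  [/\ has_arm (col T (arm_col T)), arm_col T < size T & j <= arm_col T].
Proof.
move=> Hj; apply: (last_filter_iota (p := fun j => has_arm (col T j))) => //.
exact: has_arm_size.
Qed.

Lemma noarm_gt_arm_col T j : arm_col T < j -> ~~ has_arm (col T j).
Proof. by apply: contraTN => /arm_colP[_ _]; rewrite -leqNgt. Qed.

Lemma arm_col_leq T c : (forall j, c < j -> ~~ has_arm (col T j)) -> arm_col T <= c.
Proof.
move=> noarm; set has_c := has (fun j => has_arm (col T j)) (iota 0 (size T)).
have [/hasP[j _ /arm_colP[Hc _ _]] | ] := boolP has_c.
  by rewrite leqNgt; apply: contraL Hc => /noarm.
by rewrite /has_c has_filter negbK /arm_col => /eqP->.
Qed.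

Lemma arm_col_eq T p :
  has_arm (col T p) -> (forall j, p < j -> ~~ has_arm (col T j)) -> arm_col T = p.
Proof. by move=> /arm_colP[_ _ le_p] noarm; apply/eqP; rewrite eqn_leq le_p arm_col_leq. Qed.

Lemma arm_excess_has T : arm_excess T != 0 -> exists j, has_arm (col T j).
Proof.
elim: T => //= cl T IH; rewrite addn_eq0 negb_and.
case/orP => [Hcl | /IH[j Hj]]; last by exists j.+1.
by exists 0; move: Hcl; rewrite -/(arm_count cl) arm_count_eq0 negbK.
Qed.

Lemma sumn_map_set_nth A (f : A -> nat) x0 s n y : f x0 = 0 ->
  sumn (map f (set_nth x0 s n y)) = sumn (map f s) + f y - f (nth x0 s n).
Proof.
move=> f0; have -> : map f (set_nth x0 s n y) = set_nth 0 (map f s) n (f y).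
  apply: (@eq_from_nth _ 0) => [|i]; first by rewrite size_map !size_set_nth size_map.
  rewrite size_map size_set_nth => lt_i; rewrite (nth_map x0) ?size_set_nth //.
  rewrite !nth_set_nth /=; case: eqP => // _; case: (ltnP i (size s)) => [lt_is|ge_is].
    by rewrite (nth_map x0).
  by rewrite !nth_default ?size_map.
rewrite sumn_set_nth0; case: (ltnP n (size s)) => [lt_n|ge_n]; first by rewrite (nth_map x0).
by rewrite !nth_default ?size_map ?f0.
Qed.

Lemma nth_le_sumn A (f : A -> nat) x0 s n : f x0 = 0 -> f (nth x0 s n) <= sumn (map f s).
Proof.
move=> f0; elim: s n => [|z s IH] [|n] /=; rewrite ?f0 ?leq_addr //.
exact: leq_trans (IH n) (leq_addl _ _).
Qed.

(* [bump_row T], [bumped T] and [bump_target T] are the paper's r, a and k; the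
   target is [None] when column c+1 has no entry >= a, i.e. when a new cell is
   created. *)
Definition bump_row (T : tab) : nat :=
  let cl := col T (arm_col T) in
  let mx := maxs [seq maxs (arm x) | x <- cl] in
  find (fun x => (arm x != [::]) && (maxs (arm x) == mx)) cl.

Definition bumped (T : tab) : nat := maxs (arm (cell T (bump_row T) (arm_col T))).

Definition bump_target (T : tab) : option nat :=
  let ents := [seq v <- col_entries (col T (arm_col T).+1) | bumped T <= v] in
  if ents is e :: _ then Some (foldr minn e ents) else None.

Lemma bump_targetP T : let cl' := col T (arm_col T).+1 in
  if bump_target T is Some k then
    [/\ k \in col_entries cl', bumped T <= k &
        forall v, v \in col_entries cl' -> bumped T <= v -> k <= v]
  else forall v, v \in col_entries cl' -> v < bumped T.
Proof.
move=> cl'; have := least_optionP [seq v <- col_entries cl' | bumped T <= v].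
rewrite /bump_target -/cl'; case E: [seq _ <- _ | _] => [|e s] /= => [_ v v_cl' | ].
  by rewrite ltnNge; apply/negP => le_av; have : v \in [::] by rewrite -E mem_filter le_av.
rewrite -E mem_filter => -[/andP[le_ak k_in] min_k]; split=> // v v_cl' le_av.
by apply: min_k; rewrite mem_filter le_av.
Qed.

Section BumpStep.

Variable T : tab.
Hypothesis HT : is_HVT T.
Hypothesis Hex : arm_excess T != 0.

Local Notation c := (arm_col T).
Local Notation r := (bump_row T).
Local Notation a := (bumped T).
Local Notation tgt := (bump_target T).

Let cl := col T c.
Let cl' := col T c.+1.
Let x := cell T r c.
Let inS z := (a < z) && (z <= maxs (leg x)).
Let S := [seq z <- leg x | inS z].
Let rt := if tgt is Some k then find (fun y => k \in entries y) cl' else size cl'.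
Let y := cell T rt c.+1.
Let addarm s := if tgt is Some k then sort leq (rcons s k) else s.
Let x1 : hcell :=
  if rt != r then (hk x, leg x, rem a (arm x))
  else (hk x, [seq z <- leg x | ~~ inS z], rem a (arm x)).
Let y1 : hcell :=
  if rt != r then
    match tgt with
    | None => (a, [::], [::])
    | Some k =>
        if hk y == k then (a, leg y, addarm (arm y))
        else if k \in leg y then (hk y, sort leq (repl1 k a (leg y)), addarm (arm y))
        else (hk y, leg y, addarm (sort leq (repl1 k a (arm y))))
    end
  else (a, sort leq (S ++ leg y), addarm (arm y)).
Let T' := set_nth [::] (set_nth [::] T c (set_nth dcell cl r x1)) c.+1 (set_nth dcell cl' rt y1).

Let VbE : Vb T = T'.
Proof. by rewrite /Vb (negbTE Hex). Qed.

Let young_T : young_cols T. Proof. by have [] := proj1 (is_HVT_local T) HT. Qed.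
Let valid_T : valid_hooks T. Proof. by have [] := proj1 (is_HVT_local T) HT. Qed.
Let rows_T : rows_weak T. Proof. by have [] := proj1 (is_HVT_local T) HT. Qed.
Let cols_T : cols_strict T. Proof. by have [] := proj1 (is_HVT_local T) HT. Qed.

Let col_T i i' j : i < i' -> i' < size (col T j) -> maxe (cell T i j) < mine (cell T i' j).
Proof. by case: HT => _ _ _; apply. Qed.

Let c_arm : has_arm cl /\ c < size T.
Proof. by have [j /arm_colP[]] := arm_excess_has Hex. Qed.

Let noarm_right i j : c < j -> arm (cell T i j) = [::].
Proof. by move/noarm_gt_arm_col/has_armPn; apply. Qed.

Let bump_row_spec : [/\ r < size cl, arm x != [::] & a = maxs [seq maxs (arm z) | z <- cl]].
Proof.
set mx := maxs _; set P := fun z => (arm z != [::]) && (maxs (arm z) == mx).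
have [/hasP[w w_cl /= arm_w] _] := c_arm.
have [e e_w] : exists e, e \in arm w by case: (arm w) arm_w => // e s _; exists e; apply: mem_head.
have w_valid : valid_hook w by case/(nthP dcell): w_cl => i lt_i <-; apply: valid_T.
have mx_gt0 : 0 < mx.
  have /andP[hk_gt0 _] := w_valid.
  apply: leq_trans hk_gt0 (leq_trans (valid_hook_arm_ge w_valid e_w) _).
  exact: leq_trans (maxs_ge e_w) (maxs_ge (map_f (fun z => maxs (arm z)) w_cl)).
have /mapP[z z_cl mx_z] : mx \in [seq maxs (arm z) | z <- cl].
  by apply: maxs_mem; case: cl w_cl.
have hasP_cl : has P cl.
  apply/hasP; exists z; rewrite // /P -mx_z eqxx andbT.
  by move: mx_gt0; rewrite mx_z; case: (arm z).
have lt_r : r < size cl by rewrite -has_find.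
by have /andP[? /eqP<-] := nth_find dcell hasP_cl.
Qed.

Lemma bump_row_lt : r < size (col T c).
Proof. by case: bump_row_spec. Qed.

Lemma bumped_arm : a \in arm (cell T r c).
Proof. by case: bump_row_spec => _ arm_x _; apply: (@maxs_mem (arm x)). Qed.

Lemma arm_le_bumped i e : e \in arm (cell T i c) -> e <= a.
Proof.
case: bump_row_spec => _ _ ->; case: (ltnP i (size cl)) => [lt_i | ge_i] e_i.
  exact: leq_trans (maxs_ge e_i) (maxs_ge (map_f (fun z => maxs (arm z)) (mem_nth dcell lt_i))).
by move: e_i; rewrite /cell nth_default.
Qed.

Let x_valid : valid_hook x.
Proof. exact/valid_T/bump_row_lt. Qed.

Let hk_x_le : hk x <= a.
Proof. exact: valid_hook_arm_ge x_valid bumped_arm. Qed.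

Let a_gt0 : 0 < a.
Proof. by have /andP[hk_gt0 _] := x_valid; apply: leq_trans hk_gt0 hk_x_le. Qed.

Let a_entries : a \in entries x.
Proof. by rewrite entriesE bumped_arm !orbT. Qed.

Let tgt_some k : tgt = Some k ->
  [/\ k \in col_entries cl', a <= k, (forall v, v \in col_entries cl' -> a <= v -> k <= v),
      rt < size cl' & k \in entries y].
Proof.
move=> Ek; have := bump_targetP T; rewrite Ek => -[k_in le_ak min_k].
have has_k : has (fun z => k \in entries z) cl'.
  by case/col_entriesP: k_in => i lt_i k_i; apply/hasP; exists (nth dcell cl' i); rewrite ?mem_nth.
split=> //; first by rewrite /rt Ek -has_find.
by rewrite /y /cell /rt Ek; apply: (nth_find dcell has_k).
Qed.

Let tgt_none : tgt = None ->
  [/\ (forall v, v \in col_entries cl' -> v < a), rt = size cl' & y = dcell].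
Proof.
move=> En; have := bump_targetP T; rewrite En => lt_a.
have Ert : rt = size cl' by rewrite /rt En.
by split=> //; rewrite /y /cell Ert nth_default.
Qed.

Let y_noarm : arm y = [::].
Proof. exact: noarm_right. Qed.

Let rt_le_r : rt <= r.
Proof.
rewrite leqNgt; apply/negP => lt_r_rt.
have lt_r' : r < size cl'.
  case Et: tgt => [k|]; last by have [_ <- _] := tgt_none Et.
  by have [_ _ _ lt_rt _] := tgt_some Et; apply: ltn_trans lt_rt.
have z_in : hk (cell T r c.+1) \in col_entries cl' by apply: col_entries_cell lt_r' (hk_entries _).
have /maxe_le_mineP/(_ a _ a_entries (hk_entries _)) le_az := rows_T lt_r'.
case Et: tgt => [k|].
- have [_ _ min_k lt_rt k_y] := tgt_some Et.
  have /maxe_lt_mineP/(_ _ _ (hk_entries _) k_y) := col_T lt_r_rt lt_rt.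
  by rewrite ltnNge min_k.
- by have [lt_a _ _] := tgt_none Et; have := lt_a _ z_in; rewrite ltnNge le_az.
Qed.

Let below_rt_lt i v : i < rt -> v \in entries (cell T i c.+1) -> v < a.
Proof.
move=> lt_i v_i; case Et: tgt => [k|].
- have [_ _ min_k lt_rt k_y] := tgt_some Et.
  rewrite ltnNge; apply/negP => le_av.
  have le_kv := min_k _ (col_entries_cell (ltn_trans lt_i lt_rt) v_i) le_av.
  have /maxe_lt_mineP/(_ _ _ v_i k_y) := col_T lt_i lt_rt.
  by rewrite ltnNge le_kv.
- have [lt_a Ert _] := tgt_none Et; apply: lt_a; apply: col_entries_cell v_i.
  by rewrite -/cl' -Ert.
Qed.

Let y_valid k : tgt = Some k -> valid_hook y.
Proof. by move=> Et; have [_ _ _ lt_rt _] := tgt_some Et; apply: valid_T. Qed.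

Let same_row_target k : tgt = Some k -> rt = r -> k = hk y /\ maxe x <= mine y.
Proof.
move=> Et Er; have [_ _ min_k lt_rt k_y] := tgt_some Et.
have le_xy : maxe x <= mine y by move: (rows_T lt_rt); rewrite /y Er.
split=> //; move: k_y; rewrite entriesE y_noarm orbF => /orP[/eqP // | k_leg].
have le_ay : a <= hk y by apply: (elimT (maxe_le_mineP _ _) le_xy) a_entries (hk_entries _).
have := min_k _ (col_entries_cell lt_rt (hk_entries _)) le_ay.
by rewrite leqNgt (valid_hook_leg_gt (y_valid Et) k_leg).
Qed.

Let leg_target k : tgt = Some k -> hk y != k -> k \in leg y /\ hk y < a.
Proof.
move=> Et ne_hk; have [_ _ min_k lt_rt k_y] := tgt_some Et.
have k_leg : k \in leg y by move: k_y; rewrite entriesE y_noarm orbF eq_sym (negbTE ne_hk).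
split=> //; rewrite ltnNge; apply/negP => le_ay.
have := min_k _ (col_entries_cell lt_rt (hk_entries _)) le_ay.
by rewrite leqNgt (valid_hook_leg_gt (y_valid Et) k_leg).
Qed.

Let x1E : [/\ hk x1 = hk x, arm x1 = rem a (arm x) &
  leg x1 = if rt != r then leg x else [seq z <- leg x | ~~ inS z]].
Proof. by rewrite /x1; case: ifP. Qed.

Let S_spec v : v \in S -> a < v /\ v \in leg x.
Proof. by rewrite mem_filter => /andP[/andP[lt_av _] v_leg]. Qed.

Let x1_entries v : v \in entries x1 -> v \in entries x.
Proof.
rewrite !entriesE; case: x1E => -> -> -> /or3P[-> // | v_leg | /(mem_subseq (rem_subseq _ _)) ->].
  by case: ifP v_leg => _ => [-> | /(mem_subseq (filter_subseq _ _)) ->]; rewrite orbT.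
by rewrite !orbT.
Qed.

Let x1_arm e : e \in arm x1 -> e \in arm x.
Proof. by case: x1E => _ -> _; apply: (mem_subseq (rem_subseq _ _)). Qed.

Let x1_le_a v : rt = r -> v \in entries x1 -> v <= a.
Proof.
move=> Er; case: x1E => Eh _ El; rewrite entriesE Eh El Er eqxx /=.
case/or3P=> [/eqP-> // | | /x1_arm]; last exact: arm_le_bumped.
rewrite mem_filter /inS negb_and -leqNgt => /andP[/orP[] // + /maxs_ge]; lia.
Qed.

Let x1_hook_leg v : v \in hook_leg x -> v <= a -> v \in hook_leg x1.
Proof.
case: x1E => Eh _ El; rewrite /hook_leg !inE Eh El => /orP[-> // | v_leg] le_va.
case: ifP => _; rewrite ?v_leg ?orbT //.
by rewrite mem_filter v_leg andbT /inS negb_and -leqNgt le_va orbT.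
Qed.

Let x1_valid : valid_hook x1.
Proof.
move: x_valid; rewrite !valid_hookE; case: x1E => -> -> ->.
case/and5P=> -> leg_gt leg_uniq leg_sorted /andP[arm_ge arm_sorted] /=.
have filter_leg := filter_subseq (fun z => ~~ inS z) (leg x).
apply/and5P; split; try by case: ifP.
- by case: ifP => // _; apply/allP => z /(mem_subseq filter_leg); apply/allP.
- by case: ifP => // _; apply: filter_uniq.
- by case: ifP => // _; exact: (subseq_sorted leq_trans filter_leg leg_sorted).
- by apply/allP => z /(mem_subseq (rem_subseq _ _)); apply/allP.
- exact: (subseq_sorted leq_trans (rem_subseq _ _) arm_sorted).
Qed.

Let y1_cases :
  [\/ rt = r /\ y1 = (a, sort leq (S ++ leg y), if tgt is Some k then [:: k] else [::]),
      [/\ rt != r, tgt = None & y1 = (a, [::], [::])],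
      exists k, [/\ rt != r, tgt = Some k, hk y = k & y1 = (a, leg y, [:: k])] |
      exists k, [/\ rt != r, tgt = Some k, hk y != k, k \in leg y &
                   y1 = (hk y, sort leq (repl1 k a (leg y)), [:: k])]].
Proof.
rewrite /y1 /addarm y_noarm; case: eqP => [-> | /eqP ne_r] /=.
  by apply: Or41; split=> //; case: tgt.
case Et: tgt => [k|]; last exact: Or42.
have [Ehk | ne_hk] := eqVneq (hk y) k; first by apply: Or43; exists k.
have [k_leg _] := leg_target Et ne_hk.
by rewrite k_leg; apply: Or44; exists k.
Qed.

Let y1_arm : arm y1 = if tgt is Some k then [:: k] else [::].
Proof. by case: y1_cases => [[_ ->] | [_ -> ->] | [k [_ -> _ ->]] | [k [_ -> _ _ ->]]]. Qed.

Let y1_hook_leg : a \in hook_leg y1.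
Proof.
case: y1_cases => [[_ ->] | [_ _ ->] | [k [_ _ _ ->]] | [k [_ _ _ k_leg ->]]];
  rewrite /hook_leg /= ?mem_head //.
by rewrite inE mem_sort repl1_mem ?orbT.
Qed.

Let S_lt_leg_y k : tgt = Some k -> rt = r -> forall s v, s \in S -> v \in leg y -> s < v.
Proof.
move=> Et Er s v /S_spec[_ s_leg] v_leg; have [_ /maxe_le_mineP le_xy] := same_row_target Et Er.
apply: leq_ltn_trans (le_xy _ _ _ (hk_entries _)) (valid_hook_leg_gt (y_valid Et) v_leg).
by rewrite entriesE s_leg orbT.
Qed.

Let y1_entries v : v \in entries y1 ->
  [\/ v = a, tgt != None /\ v \in entries y | rt = r /\ v \in S].
Proof.
case: y1_cases => [[Er ->] | [_ Et ->] | [k [_ Et Ehk ->]] | [k [_ Et _ k_leg ->]]];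
  rewrite entries_triple ?Et.
- case/or3P => [/eqP-> | | ]; first exact: Or31.
  + rewrite mem_sort mem_cat => /orP[v_S | v_leg]; first exact: Or33.
    case Et: tgt => [k|]; last by have [_ _ Ey] := tgt_none Et; rewrite Ey in v_leg.
    by apply: Or32; rewrite entriesE v_leg orbT.
  + case Et: tgt => [k|] //; rewrite inE => /eqP->; apply: Or32.
    by have [_ _ _ _ k_y] := tgt_some Et.
- by rewrite orbF => /eqP->; apply: Or31.
- case/or3P => [/eqP-> | v_leg | ]; first exact: Or31.
    by apply: Or32; rewrite entriesE v_leg orbT.
  by rewrite inE => /eqP->; apply: Or32; rewrite -Ehk hk_entries.
- case/or3P => [/eqP-> | | ]; first by apply: Or32; rewrite hk_entries.
    rewrite mem_sort => /mem_repl1[-> | v_leg]; first exact: Or31.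
    by apply: Or32; rewrite entriesE v_leg orbT.
  by rewrite inE => /eqP->; apply: Or32; rewrite entriesE k_leg orbT.
Qed.

Let y1_valid : valid_hook y1.
Proof.
case: y1_cases => [[Er ->] | [_ _ ->] | [k [_ Et Ehk ->]] | [k [_ Et ne_hk k_leg ->]]];
  rewrite valid_hook_triple ?a_gt0 //=.
- have S_uniq : uniq S.
    by move: x_valid; rewrite valid_hookE => /and5P[_ _ leg_uniq _ _]; apply: filter_uniq.
  have S_gt : all (ltn a) S by apply/allP => v /S_spec[].
  rewrite (sort_sorted leq_total) all_sort sort_uniq all_cat cat_uniq S_uniq S_gt /=.
  case Et: tgt => [k|] /=; last by have [_ _ ->] := tgt_none Et.
  have [Ek _] := same_row_target Et Er; have [_ le_ak _ _ _] := tgt_some Et.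
  move: (y_valid Et); rewrite valid_hookE -Ek => /and5P[_ /allP leg_gt -> _ _].
  rewrite le_ak !andbT; apply/andP; split.
    by apply/allP => v /leg_gt; apply: leq_ltn_trans le_ak.
  apply/hasPn => v v_leg; apply/negP => v_S.
  by have := S_lt_leg_y Et Er v_S v_leg; rewrite ltnn.
- have [_ le_ak _ _ _] := tgt_some Et.
  move: (y_valid Et); rewrite valid_hookE Ehk => /and5P[_ /allP leg_gt -> -> _].
  by rewrite le_ak !andbT; apply/allP => v /leg_gt; apply: leq_ltn_trans le_ak.
- have [k_in le_ak min_k lt_rt _] := tgt_some Et.
  move: (y_valid Et); rewrite valid_hookE => /and5P[-> /allP leg_gt leg_uniq _ _].
  rewrite (sort_sorted leq_total) all_sort sort_uniq (ltnW (leg_gt _ k_leg)) /=.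
  apply/andP; split.
    by apply/allP => v /mem_repl1[-> | /leg_gt //]; case: (leg_target Et ne_hk).
  rewrite andbT; have [<- | ne_ak] := eqVneq a k; first by rewrite repl1_id.
  apply: repl1_uniq => //; apply/negP => a_leg.
  have a_in : a \in col_entries cl'.
    by apply: col_entries_cell lt_rt _; rewrite entriesE a_leg orbT.
  by move: ne_ak; rewrite eqn_leq le_ak min_k.
Qed.

Let x1_mine : mine x <= mine x1.
Proof. exact/mine_le/x1_entries/mine_mem. Qed.

Let x1_maxe : maxe x1 <= maxe x.
Proof. exact/maxe_ge/x1_entries/maxe_mem. Qed.

Let y1_maxe : tgt != None -> maxe y1 <= maxe y.
Proof.
case Et: tgt => [k|] // _; have [_ le_ak _ _ k_y] := tgt_some Et.
case: (y1_entries (maxe_mem y1)) => [-> | [_ v_y] | [Er /S_spec[_ v_leg]]].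
- exact: leq_trans le_ak (maxe_ge k_y).
- exact: maxe_ge.
- have [_ /maxe_le_mineP le_xy] := same_row_target Et Er.
  apply: leq_trans (le_xy _ _ _ (hk_entries _)) (maxe_ge (hk_entries _)).
  by rewrite entriesE v_leg orbT.
Qed.

Let col_T' j : col T' j =
  if j == c.+1 then set_nth dcell cl' rt y1 else if j == c then set_nth dcell cl r x1 else col T j.
Proof. by rewrite /T' nth_set_nth /=; case: eqP => // _; rewrite nth_set_nth. Qed.

Let cell_T' i j : cell T' i j =
  if (j == c.+1) && (i == rt) then y1 else if (j == c) && (i == r) then x1 else cell T i j.
Proof.
rewrite /cell col_T'; have [-> | ne_j] := eqVneq j c.+1.
  by rewrite nth_set_nth /= (gtn_eqF (ltnSn c)).
by case: eqP => [-> | _] //=; rewrite nth_set_nth /=; case: eqP.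
Qed.

Let rt_lt : tgt != None -> rt < size cl'.
Proof. by case Et: tgt => [k|] // _; have [] := tgt_some Et. Qed.

Let size_col_T' j : size (col T' j) = size (col T j) + ((j == c.+1) && (tgt == None)).
Proof.
rewrite col_T'; have [-> | ne_j] := eqVneq j c.+1; rewrite /= ?addn0.
  rewrite size_set_nth; case Et: tgt => /=.
    by rewrite addn0; apply/maxn_idPr/rt_lt; rewrite Et.
  by have [_ -> _] := tgt_none Et; rewrite addn1; apply/maxn_idPl.
by case: eqP => [-> | _] //; rewrite size_set_nth; apply/maxn_idPr/bump_row_lt.
Qed.

Let size_T' : size T' = maxn c.+2 (size T).
Proof. by rewrite /T' !size_set_nth; congr maxn; apply/maxn_idPr; case: c_arm. Qed.

Let old_cell i j :
  i < size (col T' j) -> ~~ ((j == c.+1) && (i == rt)) -> i < size (col T j).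
Proof.
rewrite size_col_T'; have [-> | _] //= := eqVneq j c.+1; last by rewrite addn0.
case Et: tgt => /=; first by rewrite addn0.
by have [_ Ert _] := tgt_none Et; rewrite -/cl' -Ert addn1 ltnS leq_eqVlt => /orP[->|].
Qed.

Let none_lt : tgt = None -> size cl' < size cl.
Proof. by move=> Et; have [_ <- _] := tgt_none Et; apply: leq_ltn_trans rt_le_r bump_row_lt. Qed.

Let young_T' : young_cols T'.
Proof.
have [pos decr] := young_T; have [_ lt_c] := c_arm; split=> j.
  rewrite size_T' size_col_T' => lt_j; have [-> | ne_j] := eqVneq j c.+1.
    case Et: tgt => /=; last by rewrite addn1.
    by rewrite addn0; apply: leq_ltn_trans (leq0n rt) (rt_lt _); rewrite Et.
  by rewrite /= addn0; apply: pos; move/eqP: ne_j; lia.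
rewrite !size_col_T' eqSS; have [-> | ne_j] := eqVneq j c.
  rewrite (ltn_eqF (ltnSn c)) /= addn0; case Et: tgt => /=; first by rewrite addn0.
  by rewrite addn1; apply: none_lt.
by rewrite /= addn0; apply: leq_trans (decr j) (leq_addr _ _).
Qed.

Let valid_T' : valid_hooks T'.
Proof.
move=> j i lt_i; rewrite cell_T'; case: ifP => [_ | ne_y]; first exact: y1_valid.
by case: ifP => [_ | _]; [exact: x1_valid | apply/valid_T/old_cell; rewrite ?ne_y].
Qed.

Let left_of_rt_lt u : rt != r -> u \in entries (cell T rt c) -> u < a.
Proof.
move=> ne_r u_rt; have lt_rt : rt < r by rewrite ltn_neqAle ne_r rt_le_r.
by have /maxe_lt_mineP := col_T lt_rt bump_row_lt; apply.
Qed.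

Let row_T'_arm_col i : i < size (col T' c.+1) -> maxe (cell T' i c) <= mine (cell T' i c.+1).
Proof.
move=> lt_i; rewrite !cell_T' !eqxx (ltn_eqF (ltnSn c)) (gtn_eqF (ltnSn c)) /=.
have [-> | ne_i] := eqVneq i rt; last first.
  have lt_i' : i < size cl' by apply: old_cell lt_i _; rewrite eqxx ne_i.
  case: eqP => [Ei | _]; last exact: rows_T.
  by move: lt_i'; rewrite Ei => /rows_T; apply: leq_trans x1_maxe.
apply/maxe_le_mineP => u v; have [Er | ne_r] := eqVneq rt r.
  move=> /(x1_le_a Er) le_ua /y1_entries[-> // | [tgt_ok v_y] | [_ /S_spec[lt_av _]]].
    case Et: tgt tgt_ok => [k|] // _; have [_ /maxe_le_mineP le_xy] := same_row_target Et Er.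
    exact: leq_trans le_ua (le_xy _ _ a_entries v_y).
  exact: leq_trans le_ua (ltnW lt_av).
move=> u_rt /y1_entries[-> | [tgt_ok v_y] | [Er _]].
- exact/ltnW/(left_of_rt_lt ne_r).
- by have /maxe_le_mineP := rows_T (rt_lt tgt_ok); apply.
- by rewrite Er eqxx in ne_r.
Qed.

Let row_T'_next_col i :
  i < size (col T' c.+2) -> maxe (cell T' i c.+1) <= mine (cell T' i c.+2).
Proof.
move=> lt_i; have lt_i' : i < size (col T c.+2) by apply: old_cell lt_i _; rewrite eqSS gtn_eqF.
rewrite !cell_T' eqxx (gtn_eqF (ltnSn c)) (gtn_eqF (ltnSn c.+1)) (gtn_eqF (leqW (ltnSn c))) /=.
have [Ei | _] := eqVneq i rt; last exact: rows_T.
have tgt_ok : tgt != None.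
  case Et: tgt => [k|] //; have [_ Ert _] := tgt_none Et.
  have := leq_trans lt_i' (young_cols_mono young_T (leqnSn c.+1)).
  by rewrite -/cl' Ei Ert ltnn.
by move: lt_i'; rewrite Ei => /rows_T; apply: leq_trans (y1_maxe tgt_ok).
Qed.

Let rows_T' : rows_weak T'.
Proof.
move=> i j lt_i; have [Ej | ne_c] := eqVneq j c; first by subst j; apply: row_T'_arm_col.
have [Ej | ne_c1] := eqVneq j c.+1; first by subst j; apply: row_T'_next_col.
have lt_i' : i < size (col T j.+1) by apply: old_cell lt_i _; rewrite eqSS (negbTE ne_c).
rewrite !cell_T' eqSS (negbTE ne_c) (negbTE ne_c1) /=.
case: ifP => [/andP[/eqP Ej /eqP Ei] | _]; last exact: rows_T.
by have := rows_T lt_i'; rewrite Ej Ei => /leq_trans; apply; apply: x1_mine.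
Qed.

Let col_T'_arm_col i : i.+1 < size (col T' c) -> maxe (cell T' i c) < mine (cell T' i.+1 c).
Proof.
move=> lt_i; have lt_i' : i.+1 < size (col T c) by apply: old_cell lt_i _; rewrite ltn_eqF.
rewrite !cell_T' (ltn_eqF (ltnSn c)) eqxx /=.
have [Ei | ne_i] := eqVneq i r.
  by subst i; rewrite (gtn_eqF (ltnSn r)); apply: leq_ltn_trans x1_maxe (cols_T lt_i').
have [Ei | _] := eqVneq i.+1 r; last exact: cols_T.
by have := cols_T lt_i'; rewrite Ei => /leq_trans; apply.
Qed.

Let col_T'_next_col i :
  i.+1 < size (col T' c.+1) -> maxe (cell T' i c.+1) < mine (cell T' i.+1 c.+1).
Proof.
move=> lt_i; rewrite !cell_T' eqxx (gtn_eqF (ltnSn c)) /=.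
have [Ei | ne_i] := eqVneq i rt.
  subst i; rewrite (gtn_eqF (ltnSn rt)).
  have tgt_ok : tgt != None.
    case Et: tgt lt_i => [k|] //; have [_ Ert _] := tgt_none Et.
    by rewrite size_col_T' eqxx Et -/cl' Ert addn1 ltnn.
  have lt_i' : rt.+1 < size cl' by apply: old_cell lt_i _; rewrite (gtn_eqF (ltnSn rt)) andbF.
  exact: leq_ltn_trans (y1_maxe tgt_ok) (cols_T lt_i').
have [Ei | ne_i1] := eqVneq i.+1 rt; last first.
  by apply: cols_T; apply: old_cell lt_i _; rewrite (negbTE ne_i1) andbF.
have lt_irt : i < rt by rewrite -Ei.
apply/maxe_lt_mineP => u v u_i; have lt_ua := below_rt_lt lt_irt u_i.
case/y1_entries => [-> // | [tgt_ok v_y] | [_ /S_spec[lt_av _]]]; last exact: ltn_trans lt_av.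
have := @cols_T i c.+1; by rewrite Ei => /(_ (rt_lt tgt_ok))/maxe_lt_mineP; apply.
Qed.

Let cols_T' : cols_strict T'.
Proof.
move=> i j lt_i; have [Ej | ne_c1] := eqVneq j c.+1; first by subst j; apply: col_T'_next_col.
have [Ej | ne_c] := eqVneq j c; first by subst j; apply: col_T'_arm_col.
have lt_i' : i.+1 < size (col T j) by apply: old_cell lt_i _; rewrite (negbTE ne_c1).
by rewrite !cell_T' (negbTE ne_c1) (negbTE ne_c); apply: cols_T.
Qed.

Let arm_count_next_col : arm_count cl' = 0.
Proof. by apply/eqP; rewrite arm_count_eq0; apply/has_armPn => i; apply: noarm_right. Qed.

Let arm_count_x1_col : arm_count (set_nth dcell cl r x1) = (arm_count cl).-1.
Proof.
rewrite /arm_count sumn_map_set_nth //.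
rewrite -!/(arm_count _) (_ : size (arm x1) = (size (arm x)).-1); last first.
  by case: x1E => _ -> _; rewrite size_rem // bumped_arm.
have arm_x_gt0 : 0 < size (arm x) by case: bump_row_spec => _; case: (arm x).
have : size (arm x) <= arm_count cl := @nth_le_sumn _ (fun z => size (arm z)) dcell cl r erefl.
change (nth dcell cl r) with x; lia.
Qed.

Let arm_count_y1_col : arm_count (set_nth dcell cl' rt y1) = (tgt != None).
Proof.
rewrite /arm_count sumn_map_set_nth // -!/(arm_count _) arm_count_next_col.
by rewrite y1_arm -/y y_noarm; case: tgt.
Qed.

Lemma Vb_HVT : is_HVT (Vb T).
Proof.
rewrite VbE; apply/is_HVT_local.
by split; [apply: young_T' | apply: valid_T' | apply: rows_T' | apply: cols_T'].
Qed.

Lemma col_Vb_other j : j != c -> j != c.+1 -> col (Vb T) j = col T j.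
Proof. by move=> /negbTE ne_c /negbTE ne_c1; rewrite VbE col_T' ne_c ne_c1. Qed.

Lemma size_col_Vb j : size (col (Vb T) j) = size (col T j) + ((j == c.+1) && (tgt == None)).
Proof. by rewrite VbE size_col_T'. Qed.

Lemma size_Vb : size (Vb T) = maxn c.+2 (size T).
Proof. by rewrite VbE size_T'. Qed.

Lemma arm_Vb_arm_col i e : e \in arm (cell (Vb T) i c) -> e \in arm (cell T i c).
Proof.
by rewrite VbE cell_T' (ltn_eqF (ltnSn c)) eqxx /=; case: eqP => [-> /x1_arm | _].
Qed.

Lemma hook_leg_Vb_arm_col i v :
  v \in hook_leg (cell T i c) -> v <= a -> v \in hook_leg (cell (Vb T) i c).
Proof.
by rewrite VbE cell_T' (ltn_eqF (ltnSn c)) eqxx /=; case: eqP => [-> | _] //; apply: x1_hook_leg.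
Qed.

Lemma arm_count_Vb_arm_col : arm_count (col (Vb T) c) = (arm_count (col T c)).-1.
Proof. by rewrite VbE col_T' (ltn_eqF (ltnSn c)) eqxx arm_count_x1_col. Qed.

Lemma bumped_Vb_next_col :
  exists2 i, i < size (col (Vb T) c.+1) & a \in hook_leg (cell (Vb T) i c.+1).
Proof.
exists rt; last by rewrite VbE cell_T' !eqxx; apply: y1_hook_leg.
rewrite size_col_Vb eqxx; case Et: tgt => /=; first by rewrite addn0 rt_lt ?Et.
by have [_ -> _] := tgt_none Et; rewrite addn1.
Qed.

Lemma arm_Vb_next_col i e : e \in arm (cell (Vb T) i c.+1) -> tgt = Some e.
Proof.
rewrite VbE cell_T' eqxx (gtn_eqF (ltnSn c)) /=; case: eqP => _; last by rewrite noarm_right.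
by rewrite y1_arm; case: tgt => // k; rewrite inE => /eqP->.
Qed.

Lemma arm_count_Vb_next_col : arm_count (col (Vb T) c.+1) = (tgt != None).
Proof. by rewrite VbE col_T' eqxx arm_count_y1_col. Qed.

Lemma arm_excess_Vb : arm_excess (Vb T) = (arm_excess T).-1 + (tgt != None).
Proof.
have -> : arm_excess (Vb T) = sumn (map arm_count (Vb T)) by [].
rewrite VbE /T' sumn_map_set_nth // sumn_map_set_nth // nth_set_nth /= (gtn_eqF (ltnSn c)).
rewrite arm_count_x1_col arm_count_y1_col -/cl -/cl' arm_count_next_col.
have arm_cl_gt0 : 0 < arm_count cl by rewrite lt0n arm_count_eq0 negbK; case: c_arm.
have := @nth_le_sumn _ arm_count [::] T c erefl; rewrite -/cl.
have -> : sumn (map arm_count T) = arm_excess T by [].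
by case: (tgt != None); lia.
Qed.

End BumpStep.

Lemma tab_shape_eq T1 T2 : size T1 = size T2 ->
  (forall j, size (col T1 j) = size (col T2 j)) -> tab_shape T1 = tab_shape T2.
Proof.
move=> eq_size eq_col; apply: (@eq_from_nth _ 0); first by rewrite !size_tab_shape.
by move=> i _; rewrite !nth_tab_shape.
Qed.

Lemma tab_shape_neq T1 T2 j : size (col T1 j) != size (col T2 j) -> tab_shape T1 != tab_shape T2.
Proof. by apply: contraNneq => eq_sh; rewrite -!nth_tab_shape eq_sh. Qed.

Lemma ViterE n R : Viter n R =
  if (tab_shape (Vb R) != tab_shape R) || (Vb R == R) then Vb R
  else if n is n'.+1 then Viter n' (Vb R) else Vb R.
Proof. by case: n. Qed.

(* A weakly increasing chain of entries in columns c+1, ..., j dominating the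
   arms of column c: the next insertion from column c must pass column j
   before creating a new cell. *)
Definition bump_chain (R : tab) (c j : nat) : Prop := exists w : nat -> nat,
  [/\ (forall m, c < m -> m <= j -> w m \in col_entries (col R m)),
      (forall m, c < m -> m < j -> w m <= w m.+1) &
      (c < j -> forall i e, e \in arm (cell R i c) -> e <= w c.+1)].

Lemma bump_chain_refl R c : bump_chain R c c.
Proof.
exists (fun=> 0).
by split=> [m lt_cm /(leq_trans lt_cm) | m lt_cm /(ltn_trans lt_cm) |]; rewrite ltnn.
Qed.

(* [R] is reached from [P] by bumping steps of one insertion started in column
   [c], and its arms now sit in column [p].  [u] records the values bumped into
   columns c+1 .. p, [w] is the chain left by the previous insertion (columns
   p+1 .. j0), and [n] is the remaining fuel of [Viter]. *)
Record insertion_state (P R : tab) (c p j0 n : nat) (u w : nat -> nat) : Prop := {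
  ins_HVT : is_HVT R;
  ins_excess : arm_excess R = arm_excess P;
  ins_size : size R = size P;
  ins_size_col : forall m, size (col R m) = size (col P m);
  ins_arm_col : arm_col R = p;
  ins_has_arm : has_arm (col R p);
  ins_start : c <= p;
  ins_fuel : size P <= p + n;
  ins_excess_gt0 : 0 < arm_excess P;
  ins_noarm_between : forall m, c < m -> m < p -> ~~ has_arm (col R m);
  ins_arm_count : c < p -> arm_count (col R p) = 1;
  ins_path_mem : forall m, c < m -> m <= p ->
    exists2 i, i < size (col R m) & u m \in hook_leg (cell R i m);
  ins_path_incr : forall m, c < m -> m < p -> u m <= u m.+1;
  ins_path_arm : c < p -> forall i e, e \in arm (cell R i p) -> u p <= e;
  ins_path_start : c < p -> forall i e, e \in arm (cell R i c) -> e <= u c.+1;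
  ins_chain_mem : forall m, p < m -> m <= j0 -> w m \in col_entries (col R m);
  ins_chain_incr : forall m, p < m -> m < j0 -> w m <= w m.+1;
  ins_chain_arm : p < j0 -> forall i e, e \in arm (cell R i p) -> e <= w p.+1 }.

Record insertion_result (P R : tab) (c j0 j : nat) : Prop := {
  res_past_chain : j0 < j;
  res_right : c < j;
  res_HVT : is_HVT R;
  res_excess : arm_excess R = (arm_excess P).-1;
  res_size_col : forall m, size (col R m) = size (col P m) + (m == j);
  res_size : size R = maxn (size P) j.+1;
  res_noarm : forall m, c < m -> ~~ has_arm (col R m);
  res_chain : bump_chain R c j }.

Section InsertionStep.

Variables (P R : tab) (c p j0 n : nat) (u w : nat -> nat).
Hypothesis S : insertion_state P R c p j0 n u w.

Local Notation a := (bumped R).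

Let HR : is_HVT R := ins_HVT S.
Let Ep : arm_col R = p := ins_arm_col S.

Let Hex : arm_excess R != 0.
Proof. by rewrite (ins_excess S) -lt0n (ins_excess_gt0 S). Qed.

Let u' m := if m == p.+1 then a else u m.

Let col_Vb m : m != p -> m != p.+1 -> col (Vb R) m = col R m.
Proof. by rewrite -Ep; apply: col_Vb_other. Qed.

Let cell_Vb i m : m != p -> m != p.+1 -> cell (Vb R) i m = cell R i m.
Proof. by move=> ne_p ne_p1; rewrite /cell col_Vb. Qed.

Let arm_p : a \in arm (cell R (bump_row R) p).
Proof. by rewrite -Ep; apply: bumped_arm. Qed.

Let u_le_a : c < p -> u p <= a.
Proof. by move=> lt_cp; apply: (ins_path_arm S lt_cp) arm_p. Qed.

Let path_mem' m : c < m -> m <= p.+1 ->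
  exists2 i, i < size (col (Vb R) m) & u' m \in hook_leg (cell (Vb R) i m).
Proof.
move=> lt_cm; rewrite /u' leq_eqVlt ltnS; have [Em _ | ne_m1 /= le_mp] := eqVneq m p.+1.
  by rewrite Em -Ep; apply: bumped_Vb_next_col.
have [i lt_i u_i] := ins_path_mem S lt_cm le_mp; exists i.
- have [Em | ne_mp] := eqVneq m p; last by rewrite col_Vb.
  by subst m; rewrite -Ep size_col_Vb // (ltn_eqF (ltnSn _)) addn0 Ep.
- have [Em | ne_mp] := eqVneq m p; last by rewrite cell_Vb.
  subst m; move: u_i; rewrite -Ep => u_i; apply: hook_leg_Vb_arm_col => //.
  by rewrite Ep; apply: u_le_a.
Qed.

Let path_incr' m : c < m -> m < p.+1 -> u' m <= u' m.+1.
Proof.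
move=> lt_cm; rewrite ltnS /u' eqSS => le_mp; rewrite (ltn_eqF (leq_ltn_trans le_mp (ltnSn p))).
have [Em | ne_mp] := eqVneq m p; first by subst m; apply: u_le_a.
by apply: (ins_path_incr S) => //; rewrite ltn_neqAle ne_mp.
Qed.

Let path_start' : c < p.+1 -> forall i e, e \in arm (cell (Vb R) i c) -> e <= u' c.+1.
Proof.
rewrite ltnS /u' eqSS => le_cp i e; have [Ec | ne_cp] := eqVneq c p.
  by subst c; rewrite -Ep => /(arm_Vb_arm_col Hex)/(arm_le_bumped HR Hex).
have lt_cp : c < p by rewrite ltn_neqAle ne_cp.
by rewrite cell_Vb ?(ltn_eqF (leqW lt_cp)) //; apply: (ins_path_start S).
Qed.

Let noarm_between' m : c < m -> m < p.+1 -> ~~ has_arm (col (Vb R) m).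
Proof.
rewrite ltnS => lt_cm le_mp; have [Em | ne_mp] := eqVneq m p.
  by subst m; rewrite -arm_count_eq0 -Ep (arm_count_Vb_arm_col HR Hex) Ep (ins_arm_count S).
have lt_mp : m < p by rewrite ltn_neqAle ne_mp.
by rewrite col_Vb ?(ltn_eqF (leqW lt_mp)) //; apply: (ins_noarm_between S).
Qed.

Let noarm_far m : p.+1 < m -> ~~ has_arm (col (Vb R) m).
Proof.
move=> lt_m; rewrite col_Vb ?gtn_eqF //; last exact: ltn_trans lt_m.
by apply: noarm_gt_arm_col; rewrite Ep; apply: ltn_trans lt_m.
Qed.

Let Viter_absorb k : bump_target R = Some k ->
  [/\ size (Vb R) = size R, forall m, size (col (Vb R) m) = size (col R m) &
      exists2 n', n = n'.+1 & Viter n R = Viter n' (Vb R)].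
Proof.
move=> Et; have := bump_targetP R; rewrite Et Ep => -[k_in _ _].
have size_col' m : size (col (Vb R) m) = size (col R m).
  by rewrite (size_col_Vb HR Hex) Et andbF addn0.
have lt_p1 : p.+1 < size R by apply: col_entries_size k_in.
have size' : size (Vb R) = size R by rewrite (size_Vb Hex) Ep; apply/maxn_idPr.
have Vb_ne : Vb R != R.
  apply/eqP => E; have := arm_count_Vb_arm_col HR Hex; rewrite E Ep.
  have : 0 < arm_count (col R p) by rewrite lt0n arm_count_eq0 negbK (ins_has_arm S).
  lia.
split=> //; case: n (ins_fuel S) => [|n' _]; first by rewrite addn0 -(ins_size S); lia.
by exists n'; rewrite // ViterE (tab_shape_eq size' size_col') eqxx (negbTE Vb_ne).
Qed.

Lemma insertion_state_absorb k : bump_target R = Some k -> exists n' u',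
  [/\ n = n'.+1, Viter n R = Viter n' (Vb R) & insertion_state P (Vb R) c p.+1 j0 n' u' w].
Proof.
move=> Et; have [size' size_col' [n' En EV]] := Viter_absorb Et.
have := bump_targetP R; rewrite Et Ep => -[_ le_ak min_k].
have arm_next : forall i e, e \in arm (cell (Vb R) i p.+1) -> e = k.
  by move=> i e; rewrite -Ep => /(arm_Vb_next_col HR Hex); rewrite Et => -[].
have count_next : arm_count (col (Vb R) p.+1) = 1 by rewrite -Ep (arm_count_Vb_next_col HR Hex) Et.
have has_next : has_arm (col (Vb R) p.+1) by rewrite -[has_arm _]negbK -arm_count_eq0 count_next.
have le_aw : p < j0 -> a <= w p.+1 by move=> lt_pj; apply: (ins_chain_arm S lt_pj) arm_p.
exists n', u'; split=> //; split.
- exact: Vb_HVT.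
- by rewrite (arm_excess_Vb HR Hex) Et -(ins_excess S) addn1 prednK // lt0n.
- by rewrite size' (ins_size S).
- by move=> m; rewrite size_col' (ins_size_col S).
- by apply: arm_col_eq has_next noarm_far.
- exact: has_next.
- exact: leqW (ins_start S).
- by rewrite addSnnS -En (ins_fuel S).
- exact: (ins_excess_gt0 S).
- exact: noarm_between'.
- by move=> _.
- exact: path_mem'.
- exact: path_incr'.
- by move=> _ i e /arm_next->; rewrite /u' eqxx.
- exact: path_start'.
- move=> m lt_pm le_mj; rewrite col_Vb ?gtn_eqF //; last exact: ltn_trans lt_pm.
  exact: (ins_chain_mem S) (ltn_trans (ltnSn p) lt_pm) le_mj.
- by move=> m lt_pm; apply: (ins_chain_incr S); apply: ltn_trans lt_pm.
- move=> lt_pj i e /arm_next->; have lt_pj' := ltn_trans (ltnSn p) lt_pj.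
  apply: leq_trans (ins_chain_incr S (ltnSn p) lt_pj).
  by apply: min_k (le_aw lt_pj'); apply: (ins_chain_mem S).
Qed.

Lemma insertion_state_final : bump_target R = None ->
  Viter n R = Vb R /\ insertion_result P (Vb R) c j0 p.+1.
Proof.
move=> Et; have := bump_targetP R; rewrite Et Ep => lt_a.
have size_col' m : size (col (Vb R) m) = size (col R m) + (m == p.+1).
  by rewrite (size_col_Vb HR Hex) Ep Et andbT.
have noarm_next : ~~ has_arm (col (Vb R) p.+1).
  apply/has_armPn => i; case E: (arm _) => [// | e s].
  have := @arm_Vb_next_col R HR Hex i e; rewrite Ep Et /cell E mem_head.
  by move/(_ isT).
have ne_shape : tab_shape (Vb R) != tab_shape R.
  by apply: (tab_shape_neq (j := p.+1)); rewrite size_col' eqxx addn1 (gtn_eqF (ltnSn _)).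
split; first by rewrite ViterE ne_shape.
split.
- rewrite ltnS leqNgt; apply/negP => lt_pj.
  have := lt_a _ (ins_chain_mem S (ltnSn p) lt_pj).
  by rewrite ltnNge (ins_chain_arm S lt_pj arm_p).
- exact: leq_ltn_trans (ins_start S) (ltnSn p).
- exact: Vb_HVT.
- by rewrite (arm_excess_Vb HR Hex) Et addn0 (ins_excess S).
- by move=> m; rewrite size_col' (ins_size_col S).
- by rewrite (size_Vb Hex) Ep (ins_size S) maxnC.
- move=> m lt_cm; case: (ltngtP m p.+1) => [lt_mp | lt_pm | ->] //.
    exact: noarm_between'.
  exact: noarm_far.
- exists u'; split.
  + move=> m lt_cm le_mp; have [i lt_i /hook_leg_entries] := path_mem' lt_cm le_mp.
    exact: col_entries_cell.
  + exact: path_incr'.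
  + exact: path_start'.
Qed.

End InsertionStep.

Lemma Viter_result P R c p j0 n u w : insertion_state P R c p j0 n u w ->
  exists j, insertion_result P (Viter n R) c j0 j.
Proof.
elim: n R p u => [|n IH] R p u S; case Et: (bump_target R) => [k|].
- by have [n' [u' [En _ _]]] := insertion_state_absorb S Et.
- by have [-> res] := insertion_state_final S Et; exists p.+1.
- have [n' [u' [[<-] -> S']]] := insertion_state_absorb S Et; exact: IH S'.
- by have [-> res] := insertion_state_final S Et; exists p.+1.
Qed.

Lemma V_result P j0 : is_HVT P -> 0 < arm_excess P -> arm_col P <= j0 ->
  bump_chain P (arm_col P) j0 -> exists j, insertion_result P (V P) (arm_col P) j0 j.
Proof.
move=> HP ex_gt0 le_cj [w [chain_mem chain_incr chain_arm]].
have [j /arm_colP[has_c _ _]] : exists j, has_arm (col P j) by apply: arm_excess_has; rewrite -lt0n.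
apply: (@Viter_result P P (arm_col P) (arm_col P) j0 (size P).+1 (fun=> 0) w).
split=> //; try by rewrite ltnn.
- lia.
- by move=> m lt_cm /(ltn_trans lt_cm); rewrite ltnn.
- by move=> m lt_cm /(leq_trans lt_cm); rewrite ltnn.
Qed.

Lemma find_iota0 (p : pred nat) N j :
  j < N -> p j -> (forall i, i < j -> ~~ p i) -> find p (iota 0 N) = j.
Proof.
move=> lt_jN pj before_j; have has_p : has p (iota 0 N) by apply/hasP; exists j; rewrite ?mem_iota.
have lt_f : find p (iota 0 N) < N by rewrite -[N in _ < N](size_iota 0 N) -has_find.
apply/eqP; rewrite eqn_leq; apply/andP; split.
  by rewrite leqNgt; apply/negP => /(before_find 0); rewrite nth_iota // add0n pj.
rewrite leqNgt; apply/negP => /before_j; have := nth_find 0 has_p.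
by rewrite nth_iota // add0n => ->.
Qed.

Lemma new_cell_spec (s s' : seq nat) j : (forall m, nth 0 s' m = nth 0 s m + (m == j)) ->
  j < size s' -> new_cell s s' = (nth 0 s j, j).
Proof.
move=> s'E lt_j; rewrite /new_cell find_map (@find_iota0 _ _ j) ?s'E ?eqxx ?addn1 //.
- exact: ltnW.
- by rewrite /preim /= s'E eqxx addn1 (ltn_eqF (ltnSn _)).
- by move=> i lt_ij; rewrite /preim /= s'E (ltn_eqF lt_ij) addn0 eqxx.
Qed.

Lemma in_skew_new lam mu mu' j i m : (forall m, nth 0 mu' m = nth 0 mu m + (m == j)) ->
  nth 0 lam j <= nth 0 mu j ->
  in_skew lam mu' i m = in_skew lam mu i m || ((i == nth 0 mu j) && (m == j)).
Proof.
move=> mu'E le_lam; rewrite /in_skew mu'E; have [-> | ne_mj] := eqVneq m j; last first.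
  by rewrite addn0 andbF orbF.
rewrite addn1 ltnS andbT.
by case: (ltngtP i (nth 0 mu j)) => [_ | _ | ->]; rewrite ?andbF ?orbF ?le_lam ?orbT.
Qed.

(* [cl] is the arm column of the previous insertion and [jl] the column of the
   cell it created.  The extra inequality [Q i j + cl <= j], with equality only
   up to column [jl], is what makes the next entry [j - c] strictly larger. *)
Definition recording_props (lam mu : seq nat) (Q : filling) (cl jl : nat) : Prop :=
  [/\ (forall i j, in_skew lam mu i j ->
         [/\ 0 < Q i j, Q i j + cl <= j & (Q i j + cl = j -> j <= jl)]),
      (forall i j j', j < j' -> in_skew lam mu i j -> in_skew lam mu i j' -> Q i j < Q i j') &
      (forall i i' j, i < i' -> in_skew lam mu i j -> in_skew lam mu i' j -> Q i j < Q i' j)].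

Lemma recording_props_add lam mu mu' Q cl jl c j :
  (forall m, nth 0 mu' m = nth 0 mu m + (m == j)) ->
  nth 0 lam j <= nth 0 mu j -> (forall m, j <= m -> nth 0 mu m <= nth 0 mu j) ->
  c <= cl -> c < j -> (c = cl -> jl < j) ->
  recording_props lam mu Q cl jl ->
  recording_props lam mu' (fun i m => if (i, m) == (nth 0 mu j, j) then j - c else Q i m) c j.
Proof.
move=> mu'E le_lam mu_decr le_c lt_cj new_right [flag row colQ].
set h := nth 0 mu j.
have skewE i m : in_skew lam mu' i m = in_skew lam mu i m || ((i == h) && (m == j)).
  exact: in_skew_new.
have old i m : in_skew lam mu i m -> ((i, m) == (h, j)) = false.
  move=> /andP[_ lt_i]; apply/negbTE; rewrite xpair_eqE.
  by apply: contraL lt_i => /andP[/eqP-> /eqP->]; rewrite ltnn.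
have flag_c i m : in_skew lam mu i m -> Q i m + c <= m /\ (Q i m + c = m -> m < j).
  move=> sk; have [_ le_m eq_m] := flag i m sk.
  split; first by apply: leq_trans le_m; rewrite leq_add2l.
  move=> E; have Ecl : c = cl by apply/eqP; rewrite eqn_leq le_c -(leq_add2l (Q i m)) E le_m.
  by apply: leq_ltn_trans (eq_m _) (new_right Ecl); rewrite -Ecl.
split.
- move=> i m; rewrite skewE => /orP[sk | /andP[/eqP-> /eqP->]]; last first.
    by rewrite eqxx subn_gt0 lt_cj subnK ?(ltnW lt_cj).
  rewrite old //; have [Q_gt0 _ _] := flag i m sk; have [le_m lt_m] := flag_c i m sk.
  by split=> // /lt_m /ltnW.
- move=> i m m' lt_m; rewrite !skewE.
  move=> /orP[sk | /andP[/eqP Ei /eqP Em]] /orP[sk' | /andP[/eqP Ei' /eqP Em']].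
  + by rewrite !old //; apply: row.
  + subst i m'; rewrite old // eqxx ltn_subRL addnC.
    exact: leq_ltn_trans (flag_c _ _ sk).1 lt_m.
  + subst i m; move: sk' => /andP[_]; rewrite ltnNge; apply: contraNT => _.
    exact/mu_decr/ltnW.
  + by subst m m'; rewrite ltnn in lt_m.
- move=> i i' m lt_i; rewrite !skewE.
  move=> /orP[sk | /andP[/eqP Ei /eqP Em]] /orP[sk' | /andP[/eqP Ei' /eqP Em']].
  + by rewrite !old //; apply: colQ.
  + subst i' m; rewrite old // eqxx ltn_subRL addnC.
    have [le_m lt_m] := flag_c _ _ sk; rewrite ltn_neqAle le_m andbT.
    by apply/eqP => /lt_m; rewrite ltnn.
  + by subst i m; move: sk' => /andP[_]; rewrite ltnNge (ltnW lt_i).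
  + by subst i i'; rewrite ltnn in lt_i.
Qed.

Record recording_inv (lam : seq nat) (P : tab) (Q : filling) (cl jl : nat) : Prop := {
  rec_HVT : is_HVT P;
  rec_young : young lam;
  rec_size : size lam <= size (tab_shape P);
  rec_sub : forall j, nth 0 lam j <= nth 0 (tab_shape P) j;
  rec_first_col : nth 0 lam 0 = nth 0 (tab_shape P) 0;
  rec_props : recording_props lam (tab_shape P) Q cl jl;
  rec_last_le : cl <= jl;
  rec_arm_col : arm_col P <= cl;
  rec_chain : arm_col P = cl -> bump_chain P cl jl }.

Lemma recording_inv_final lam P Q cl jl :
  recording_inv lam P Q cl jl -> col_flagged_increasing lam (tab_shape P) Q.
Proof.
case=> HP Y le_size sub first [flag row colQ] _ _ _; split=> //; first by case: HP.
split=> // i j /flag[Q_gt0 le_j _]; split=> //.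
exact: leq_trans (leq_addr cl _) le_j.
Qed.

Lemma recording_inv_step lam P Q cl jl : recording_inv lam P Q cl jl -> 0 < arm_excess P ->
  let rc := new_cell (tab_shape P) (tab_shape (V P)) in
  recording_inv lam (V P) (fun i j => if (i, j) == rc then rc.2 - arm_col P else Q i j)
    (arm_col P) rc.2 /\ arm_excess (V P) = (arm_excess P).-1.
Proof.
move=> inv ex_gt0 rc; set c := arm_col P; set j0 := if c == cl then jl else c.
have [j res] : exists j, insertion_result P (V P) c j0 j.
  apply: V_result (rec_HVT inv) ex_gt0 _ _; rewrite /j0; case: eqP => [Ec | _] //.
  - by rewrite -/c Ec; apply: rec_last_le inv.
  - by rewrite -/c Ec; apply: rec_chain inv Ec.
  - exact: bump_chain_refl.
have shapeE m : nth 0 (tab_shape (V P)) m = nth 0 (tab_shape P) m + (m == j).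
  by rewrite !nth_tab_shape (res_size_col res).
have -> : rc = (nth 0 (tab_shape P) j, j).
  by apply: new_cell_spec shapeE _; rewrite size_tab_shape (res_size res) leq_max ltnSn orbT.
have [Y _ _ _] := proj1 (is_HVT_local P) (rec_HVT inv).
split; last exact: res_excess res.
split=> //.
- exact: res_HVT res.
- exact: rec_young inv.
- by rewrite !size_tab_shape (res_size res) leq_max -size_tab_shape (rec_size inv).
- by move=> m; rewrite shapeE; apply: leq_trans (rec_sub inv m) (leq_addr _ _).
- by rewrite shapeE (ltn_eqF (leq_ltn_trans (leq0n c) (res_right res))) addn0 (rec_first_col inv).
- apply: recording_props_add (rec_props inv) => //.
  + exact: rec_sub inv j.
  + by move=> m le_jm; rewrite !nth_tab_shape; apply: young_cols_mono.
  + exact: rec_arm_col inv.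
  + exact: res_right res.
  + by move=> Ec; have := res_past_chain res; rewrite /j0 Ec eqxx.
- exact: ltnW (res_right res).
- exact/arm_col_leq/(res_noarm res).
- by move=> _; apply: res_chain res.
Qed.

Lemma uncrowd_aux_flagged lam n P Q cl jl : arm_excess P = n -> recording_inv lam P Q cl jl ->
  col_flagged_increasing lam (tab_shape (uncrowd_aux n P Q).1) (uncrowd_aux n P Q).2.
Proof.
elim: n P Q cl jl => [|n IH] P Q cl jl ex inv; first exact: recording_inv_final inv.
have [inv' ex'] := recording_inv_step inv (ltac:(by rewrite ex)).
by apply: IH inv'; rewrite ex' ex.
Qed.

Theorem lemma3p9 (T : tab) :
  is_HVT T ->
  col_flagged_increasing (tab_shape T) (tab_shape (uncrowdP T)) (uncrowdQ T).
Proof.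
move=> HT; apply: (@uncrowd_aux_flagged _ _ T _ (arm_col T) (arm_col T)) => //.
split=> //; first by case: HT.
- by split=> [i j | i j j' _ | i i' j _]; rewrite /in_skew; case: leqP.
- by move=> _; apply: bump_chain_refl.
Qed.
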